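(* Let $R$ be a super-commutative $\mathbb C$-algebra. Any finitely generated subalgebra $A\subset R((t))^{\sqrt{}}$ is contained in $R((t))^{\sqrt{}}_\epsilon$ for some $\epsilon\in\mathbf E$.
   Context: $R((t))^{\sqrt{}}\subset R((t))$ is the subring of Laurent series $\sum_{n\gg-\infty}a_nt^n$ with $a_n$ nilpotent for $n<0$. $\mathbf E$ is the set of sequences $\epsilon=(\epsilon_{-1},\epsilon_{-2},\dots)$ of nonnegative integers with $\epsilon_j=0$ for $j\ll0$. For $\epsilon\in\mathbf E$, $R((t))^{\sqrt{}}_\epsilon=\{\sum_{n\in\mathbb Z}a_nt^n : a_n^{1+\epsilon_n}=0 \text{ for all } n<0\}$. *)

From HB Require Import structures.
From mathcomp Require Import all_boot all_order all_algebra.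
From mathcomp Require Import complex.
From mathcomp Require Import Rstruct.
Set Implicit Arguments. Unset Strict Implicit. Unset Printing Implicit Defensive.
Import Order.TTheory GRing.Theory Num.Theory.
Local Open Scope ring_scope.

Notation CC := (Rdefinitions.R[i]).

Definition subspace (R : algType CC) (P : R -> Prop) : Prop :=
  [/\ P 0, (forall x y, P x -> P y -> P (x + y)) & (forall (c : CC) x, P x -> P (c *: x))].

Definition super_commutative (R : algType CC) (ev od : R -> Prop) : Prop :=
  [/\ subspace ev, subspace od,
      (forall x, ev x -> od x -> x = 0),
      (forall x, exists a b, [/\ ev a, od b & x = a + b]) &
      [/\ ev 1,
      (forall x y, (ev x -> ev y -> ev (x * y)) /\ (ev x -> od y -> od (x * y)) /\
                   (od x -> ev y -> od (x * y)) /\ (od x -> od y -> ev (x * y)))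
    & (forall x y, (ev x -> (ev y \/ od y) -> x * y = y * x) /\
                   (od x -> od y -> x * y = - (y * x)))]].

(* A formal Laurent series sum_n a_n t^n over R is a coefficient function
   a : int -> R vanishing for n << 0. *)
Definition vanishes_below (R : algType CC) (N : int) (f : int -> R) : Prop :=
  forall n : int, n < N -> f n = 0.

Definition is_laurent (R : algType CC) (f : int -> R) : Prop :=
  exists N : int, vanishes_below N f.

(* Product of two Laurent series both vanishing below N:
   (fg)_n = sum_{i = N}^{n - N} f_i g_{n-i}. *)
Definition lmul (R : algType CC) (N : int) (f g : int -> R) : int -> R :=
  fun n : int => if (N + N <= n)%R then
             \sum_(k < (absz (n - (N + N)%R)%R).+1) f (N + Posz k)%R * g (n - N - Posz k)%R
           else 0.

Definition lconst (R : algType CC) (c : CC) : int -> R :=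
  fun n => if n == 0 then c%:A else 0.

Inductive gen_subalg (R : algType CC) (k : nat) (g : 'I_k -> int -> R) :
    (int -> R) -> Prop :=
  | gen_gen (i : 'I_k) : gen_subalg g (g i)
  | gen_const (c : CC) : gen_subalg g (lconst R c)
  | gen_add f h : gen_subalg g f -> gen_subalg g h ->
      gen_subalg g (fun n => f n + h n)
  | gen_scale (c : CC) f : gen_subalg g f -> gen_subalg g (fun n => c *: f n)
  | gen_mul (N : int) f h : vanishes_below N f -> vanishes_below N h ->
      gen_subalg g f -> gen_subalg g h -> gen_subalg g (lmul N f h).

Definition in_sqrt (R : algType CC) (f : int -> R) : Prop :=
  is_laurent f /\ (forall n : int, n < 0 -> exists m : nat, f n ^+ m = 0).

(* E : sequences eps = (eps_{-1}, eps_{-2}, ...) of naturals, eps_j = 0 for j << 0.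
   Encoded as e : nat -> nat with e k = eps_{-(k+1)}. *)
Definition in_E (e : nat -> nat) : Prop :=
  exists M : nat, forall k : nat, (M <= k)%N -> e k = 0%N.

Definition in_sqrt_eps (R : algType CC) (e : nat -> nat) (f : int -> R) : Prop :=
  forall n : int, n < 0 -> f n ^+ (1 + e (absz n).-1) = 0.

(* Only finitely many negative coefficients of the generators can be nonzero,
   and they are nilpotent.  Their odd parts square to zero and their even parts
   are central, hence nilpotent as well, so together these parts generate a
   nilpotent ideal I, say I^M = 0.  If the poles of the generators have order
   at most L, the coefficient of index n of any element of the subalgebra lies
   in I^k with k = ceil(|n|/L): it vanishes once |n| >= M L and is nilpotent
   of order M otherwise. *)

From HB Require Import structures.
From mathcomp Require Import all_boot all_order all_algebra.
From mathcomp Require Import complex Rstruct zify.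
Import Order.TTheory GRing.Theory Num.Theory.
Local Open Scope ring_scope.
Set Implicit Arguments. Unset Strict Implicit.

Section IdealPower.
Variables (R : pzRingType) (I : finType) (s : I -> R).

Definition word_prod (w : seq I) : R := \prod_(i <- w) s i.

(* [in_ideal_pow j x]: [x] lies in the [j]-th power of the right ideal generated
   by the [s i]; this ideal is two-sided when the [s i] are normal. *)
Inductive in_ideal_pow (j : nat) : R -> Prop :=
| ideal_pow_zero : in_ideal_pow j 0
| ideal_powD x y : in_ideal_pow j x -> in_ideal_pow j y -> in_ideal_pow j (x + y)
| ideal_pow_word (w : seq I) r : (j <= size w)%N -> in_ideal_pow j (word_prod w * r).

Lemma ideal_pow_le i j x : (i <= j)%N -> in_ideal_pow j x -> in_ideal_pow i x.
Proof.
move=> le_ij; elim=> [|? ? _ ? _ ?|w r le_jw]; first exact: ideal_pow_zero.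
  exact: ideal_powD.
by apply: ideal_pow_word; apply: leq_trans le_jw.
Qed.

Lemma in_ideal_pow0 x : in_ideal_pow 0 x.
Proof.
have -> : x = word_prod [::] * x by rewrite /word_prod big_nil mul1r.
exact: ideal_pow_word.
Qed.

Lemma in_ideal_pow_gen i : in_ideal_pow 1 (s i).
Proof.
have -> : s i = word_prod [:: i] * 1 by rewrite /word_prod big_seq1 mulr1.
exact: ideal_pow_word.
Qed.

Lemma ideal_pow_sum j n (F : 'I_n -> R) :
  (forall i, in_ideal_pow j (F i)) -> in_ideal_pow j (\sum_(i < n) F i).
Proof. by move=> FI; apply: big_ind => //; [exact: ideal_pow_zero | exact: ideal_powD]. Qed.

Hypothesis s_normal : forall i r, exists r', r * s i = s i * r'.

Lemma word_prod_normal w r : exists r', r * word_prod w = word_prod w * r'.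
Proof.
elim: w r => [|i w IH] r; first by exists r; rewrite /word_prod big_nil mul1r mulr1.
have [r1 e1] := s_normal i r; have [r2 e2] := IH r1.
by exists r2; rewrite /word_prod big_cons -/(word_prod w) mulrA e1 -mulrA e2 mulrA.
Qed.

Lemma ideal_powMl j x r : in_ideal_pow j x -> in_ideal_pow j (r * x).
Proof.
elim=> [|x1 y1 _ h1 _ h2|w r0 le_jw]; first by rewrite mulr0; exact: ideal_pow_zero.
  by rewrite mulrDr; exact: ideal_powD.
have [r' e] := word_prod_normal w r.
by rewrite mulrA e -mulrA; exact: ideal_pow_word.
Qed.

Lemma ideal_powM a b x y :
  in_ideal_pow a x -> in_ideal_pow b y -> in_ideal_pow (a + b) (x * y).
Proof.
elim=> [|x1 y1 _ h1 _ h2|w r le_aw] yI; first by rewrite mul0r; exact: ideal_pow_zero.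
  by rewrite mulrDl; apply: ideal_powD; [apply: h1 | apply: h2].
elim: yI => [|x1 y1 _ h1 _ h2|w' r' le_bw']; first by rewrite mulr0; exact: ideal_pow_zero.
  by rewrite mulrDr; exact: ideal_powD.
have [r2 e] := word_prod_normal w' r.
have -> : word_prod w * r * (word_prod w' * r') = word_prod (w ++ w') * (r2 * r').
  by rewrite /word_prod big_cat /= -!/(word_prod _) -!mulrA (mulrA r) e -mulrA.
by apply: ideal_pow_word; rewrite size_cat leq_add.
Qed.

Lemma ideal_powX x n : in_ideal_pow 1 x -> in_ideal_pow n (x ^+ n).
Proof.
move=> xI; elim: n => [|n IH]; first exact: in_ideal_pow0.
by rewrite exprS -add1n; apply: ideal_powM.
Qed.

Variable m : I -> nat.
Hypothesis s_nil : forall i, s i ^+ m i = 0.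

Lemma exp_normal i c r : exists r', r * s i ^+ c = s i ^+ c * r'.
Proof.
elim: c r => [|c IH] r; first by exists r; rewrite expr0 mul1r mulr1.
have [r1 e1] := IH r; have [r2 e2] := s_normal i r1.
by exists r2; rewrite exprSr mulrA e1 -mulrA e2 mulrA.
Qed.

Lemma word_prod_count i w : exists r, word_prod w = s i ^+ count_mem i w * r.
Proof.
elim: w => [|j w [r IH]]; first by exists 1; rewrite /word_prod big_nil mulr1.
rewrite /word_prod big_cons -/(word_prod w) IH /=.
have [->|nji] := eqVneq j i; first by exists r; rewrite add1n exprS mulrA.
have [r2 e] := exp_normal i (count_mem i w) (s j).
by exists (r2 * r); rewrite add0n mulrA e mulrA.
Qed.

Lemma size_sum_count (w : seq I) : size w = (\sum_i count_mem i w)%N.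
Proof.
elim: w => [|j w IH]; first by rewrite big1.
rewrite /= big_split /= -IH (bigD1 j) //= eqxx big1 ?addn0 ?add1n // => i /negPf.
by rewrite eq_sym => ->.
Qed.

(* Pigeonhole: a word longer than [\sum_i m i] contains some [s i] at least [m i] times. *)
Lemma word_prod_eq0 w : ((\sum_i m i) < size w)%N -> word_prod w = 0.
Proof.
move=> long_w.
have [/existsP [i le_mi]|/existsPn short] := boolP [exists i, m i <= count_mem i w]%N.
  have [r ->] := word_prod_count i w.
  by rewrite -(subnK le_mi) exprD s_nil mulr0 mul0r.
move: long_w; rewrite size_sum_count ltnNge leq_sum // => i _.
by rewrite ltnW // ltnNge short.
Qed.

Lemma ideal_pow_nil x : in_ideal_pow (\sum_i m i).+1 x -> x = 0.
Proof.
elim=> [|x1 y1 _ -> _ ->|w r long_w]; [done | by rewrite addr0 |].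
by rewrite word_prod_eq0 ?mul0r.
Qed.

End IdealPower.
Section SquareZeroBinomial.
Variables (R : pzRingType) (x y : R).
Hypotheses (cxy : GRing.comm x y) (y2 : y ^+ 2 = 0).

Lemma exprD_sqr0 n : (x + y) ^+ n.+1 = x ^+ n.+1 + x ^+ n * y *+ n.+1.
Proof.
elim: n => [|n IH]; first by rewrite expr0 mul1r.
rewrite exprSr IH mulrDl !mulrDr -!exprSr -!mulrnAl.
rewrite -[_ * y * y]mulrA -expr2 y2 mulr0 addr0 -mulrA -cxy mulrA !mulrnAl -exprSr.
by rewrite -addrA -mulrS.
Qed.

Lemma exprD_sqr0_nil n : (x + y) ^+ n = 0 -> x ^+ n.*2 = 0.
Proof.
case: n => [|n]; first by rewrite !expr0.
rewrite exprD_sqr0 => /eqP; rewrite addr_eq0 => /eqP xn.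
have cyx : GRing.comm y (x ^+ n) by apply/commrX/commr_sym.
rewrite -addnn exprD xn mulrNN mulrnAl mulrnAr -mulrA [y * _]mulrA cyx.
by rewrite -mulrA -expr2 y2 !mulr0 !mul0rn.
Qed.
End SquareZeroBinomial.

Section SuperCommutative.
Variables (R : algType CC) (ev od : R -> Prop).
Hypothesis hR : super_commutative ev od.

Lemma super_decomp x : exists a b, [/\ ev a, od b & x = a + b].
Proof. by case: hR. Qed.

Lemma super_even_central x r : ev x -> GRing.comm x r.
Proof.
case: hR => _ _ _ _ [_ _ scomm] ev_x; have [a [b [ev_a od_b ->]]] := super_decomp r.
rewrite /GRing.comm mulrDl mulrDr.
by rewrite (proj1 (scomm x a) ev_x (or_introl ev_a)) (proj1 (scomm x b) ev_x (or_intror od_b)).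
Qed.

Lemma super_odd_normal y r : od y -> exists r', r * y = y * r'.
Proof.
case: hR => _ _ _ _ [_ _ scomm] od_y; have [a [b [ev_a od_b ->]]] := super_decomp r.
exists (a - b); rewrite mulrDl mulrBr (super_even_central _ ev_a).
by rewrite (proj2 (scomm b y) od_b od_y).
Qed.

(* Uses that 2 is invertible in CC. *)
Lemma super_odd_sqr y : od y -> y ^+ 2 = 0.
Proof.
case: hR => _ _ _ _ [_ _ scomm] od_y.
have : (2%:R : CC) *: y ^+ 2 = 0.
  by rewrite scaler_nat mulr2n {1}expr2 (proj2 (scomm y y) od_y od_y) expr2 addNr.
by move/eqP; rewrite scaler_eq0 pnatr_eq0 /= => /eqP.
Qed.

(* The generators are the even and odd parts of the [a i]. *)
Lemma super_nilpotent_ideal (I : finType) (a : I -> R) (na : I -> nat) :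
    (forall i, a i ^+ na i = 0) ->
  exists (J : finType) (s : J -> R) (m : J -> nat),
    [/\ forall j r, exists r', r * s j = s j * r', forall j, s j ^+ m j = 0
      & forall i, in_ideal_pow s 1 (a i)].
Proof.
move=> a_nil.
have [dec dec_a] : exists dec : I -> R * R,
    forall i, [/\ ev (dec i).1, od (dec i).2 & a i = (dec i).1 + (dec i).2].
  apply: (@fin_all_exists _ (fun _ => (R * R)%type)
    (fun i d => [/\ ev d.1, od d.2 & a i = d.1 + d.2])) => i.
  have [x [y [ev_x od_y ->]]] := super_decomp (a i).
  by exists (x, y).
pose s (q : I * bool) := if q.2 then (dec q.1).1 else (dec q.1).2.
exists ((I * bool)%type : finType), s, (fun q => if q.2 then (na q.1).*2 else 2%N).
split.
- move=> [i []] r; have [ev_x od_y _] := dec_a i; rewrite /s /=.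
    by exists r; rewrite (super_even_central r ev_x).
  exact: super_odd_normal.
- move=> [i []]; have [ev_x od_y a_eq] := dec_a i; rewrite /s /=; last exact: super_odd_sqr.
  apply: (@exprD_sqr0_nil _ _ (dec i).2); first exact: super_even_central.
    exact: super_odd_sqr.
  by rewrite -a_eq.
- move=> i; have [_ _ ->] := dec_a i.
  by apply: ideal_powD; [exact: (in_ideal_pow_gen s (i, true)) |
                          exact: (in_ideal_pow_gen s (i, false))].
Qed.

End SuperCommutative.

Section NegativeDepth.
Variable L : nat.
Hypothesis L_gt0 : (0 < L)%N.

Definition neg_depth (n : int) : nat :=
  if n < 0 then ((absz n + L.-1) %/ L)%N else 0%N.

Lemma neg_depth_nonneg n : 0 <= n -> neg_depth n = 0%N.
Proof. by rewrite /neg_depth ltNge => ->. Qed.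

Lemma neg_depthD i j : (neg_depth (i + j) <= neg_depth i + neg_depth j)%N.
Proof.
rewrite /neg_depth; case: (ltrP (i + j) 0) => // ij_lt0.
case: (ltrP i 0) => i0; case: (ltrP j 0) => j0; last lia.
- have -> : absz (i + j) = (absz i + absz j)%N by lia.
  nia.
- by rewrite addn0 leq_div2r //; lia.
- by rewrite add0n leq_div2r //; lia.
Qed.

Lemma neg_depth_gt0 n : n < 0 -> (0 < neg_depth n)%N.
Proof. by move=> n_lt0; rewrite /neg_depth n_lt0 divn_gt0 //; lia. Qed.

Lemma neg_depth_le1 n : (absz n <= L)%N -> (neg_depth n <= 1)%N.
Proof.
move=> n_le; rewrite /neg_depth; case: ifP => // _.
by rewrite -ltnS ltn_divLR //; lia.
Qed.

Lemma neg_depth_ge M n : n < 0 -> (M * L <= absz n)%N -> (M <= neg_depth n)%N.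
Proof. by move=> n_lt0 le_n; rewrite /neg_depth n_lt0 leq_divRL //; lia. Qed.

End NegativeDepth.

Section CoefficientIdeal.
Variables (R : algType CC) (I : finType) (s : I -> R) (L : nat).
Hypotheses (s_normal : forall i r, exists r', r * s i = s i * r') (L_gt0 : (0 < L)%N).

Lemma gen_subalg_ideal_pow k (g : 'I_k -> int -> R) :
    (forall i n, in_ideal_pow s (neg_depth L n) (g i n)) ->
  forall f, gen_subalg g f -> forall n, in_ideal_pow s (neg_depth L n) (f n).
Proof.
move=> gI f; elim=> {f} [i | c | f h _ fI _ hI | c f _ fI | N f h _ _ _ fI _ hI] n.
- exact: gI.
- rewrite /lconst; case: eqP => [->|_]; last exact: ideal_pow_zero.
  by rewrite neg_depth_nonneg //; apply: in_ideal_pow0.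
- exact: ideal_powD.
- by rewrite -mulr_algl; apply: ideal_powMl.
- rewrite /lmul; case: ifP => _; last exact: ideal_pow_zero.
  apply: ideal_pow_sum => j; apply: ideal_pow_le (ideal_powM s_normal (fI _) (hI _)).
  have -> : n - N - j%:Z = - (N + j%:Z) + n by lia.
  by have := neg_depthD L_gt0 (N + j%:Z) (- (N + j%:Z) + n); rewrite addrA subrr add0r.
Qed.

Variable m : I -> nat.
Hypothesis s_nil : forall i, s i ^+ m i = 0.

Lemma ideal_pow_sqrt_eps (P : (int -> R) -> Prop) :
    (forall f, P f -> forall n, in_ideal_pow s (neg_depth L n) (f n)) ->
  exists e, in_E e /\ forall f, P f -> in_sqrt_eps e f.
Proof.
move=> PI; pose M := (\sum_i m i).+1.
exists (fun j => if (j < M * L)%N then M.-1 else 0%N); split.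
  by exists (M * L)%N => j le_j; rewrite ltnNge le_j.
move=> f Pf n n_lt0; have fnI := PI f Pf n.
apply: (ideal_pow_nil s_normal s_nil); case: ifP => short.
  rewrite add1n; apply: ideal_powX => //.
  exact: ideal_pow_le (neg_depth_gt0 L_gt0 n_lt0) fnI.
rewrite expr1; apply: ideal_pow_le fnI; apply: neg_depth_ge => //; lia.
Qed.

End CoefficientIdeal.

Lemma laurent_common_bound (R : algType CC) (I : finType) (g : I -> int -> R) :
    (forall i, is_laurent (g i)) ->
  exists2 L : nat, (0 < L)%N & forall i, vanishes_below (- L%:Z) (g i).
Proof.
move=> gL; have [N gN] := fin_all_exists gL.
exists (\sum_i `|N i|).+1 => // i n n_lt; apply: gN.
have : (`|N i| <= \sum_i `|N i|)%N by rewrite (bigD1 i) //= leq_addr.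
lia.
Qed.

Theorem proposition4p1p5 (R : algType CC) (ev od : R -> Prop)
    (hR : super_commutative ev od)
    (k : nat) (g : 'I_k -> int -> R)
    (hA : forall f, gen_subalg g f -> in_sqrt f) :
  exists e : nat -> nat, in_E e /\ (forall f, gen_subalg g f -> in_sqrt_eps e f).
Proof.
have [L L_gt0 g_bound] := laurent_common_bound (fun i => (hA _ (gen_gen g i)).1).
pose a (p : 'I_k * 'I_L) := g p.1 (- (p.2.+1)%:Z).
have [na a_nil] : exists na, forall p, a p ^+ na p = 0.
  apply: (@fin_all_exists _ (fun _ => nat) (fun p n => a p ^+ n = 0)) => -[i j].
  by apply: (hA _ (gen_gen g i)).2; rewrite oppr_lt0.
have [J [s [m [s_normal s_nil a_in]]]] := super_nilpotent_ideal hR a_nil.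
apply: (ideal_pow_sqrt_eps s_normal L_gt0 s_nil).
apply: (gen_subalg_ideal_pow s_normal L_gt0) => i n.
have [n_lt0|n_ge0] := ltrP n 0; last by rewrite neg_depth_nonneg //; apply: in_ideal_pow0.
have [n_ltL|n_geL] := ltrP n (- L%:Z); first by rewrite g_bound //; apply: ideal_pow_zero.
have j_lt : ((absz n).-1 < L)%N by lia.
have -> : g i n = a (i, Ordinal j_lt).
  by rewrite /a /= {1}(_ : n = - ((absz n).-1.+1)%:Z) //; lia.
by apply: ideal_pow_le (a_in _); apply: neg_depth_le1; lia.
Qed.
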